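(* Let $(X,\mathscr{R})$ be a closed mixed reaction network with $\mathscr{R}=\mathscr{R}_{\mathrm{rev}}\sqcup\mathscr{R}_{\mathrm{irr}}$. Then $(X,\mathscr{R})$ is strictly thermodynamically sound if and only if no futile cycle contains an irreversible reaction. Here a futile cycle $v$ contains an irreversible reaction if $v_r>0$ for some $r\in\mathscr{R}_{\mathrm{irr}}$.
   Context: A reaction network (RN) $(X,\mathscr{R})$ consists of a finite non-empty set $X$ of species and a finite non-empty set $\mathscr{R}$ of reactions. Each reaction $r$ is given by stoichiometric coefficients $s^-_{xr},s^+_{xr}\in\mathbb{N}_0$. The stoichiometric matrix $S\in\mathbb{Z}^{X\times\mathscr{R}}$ has entries $S_{xr}=s^+_{xr}-s^-_{xr}$. A reaction $r$ is proper if there are $x,y$ with $S_{xr}<0<S_{yr}$, and the RN is closed if all reactions are proper. The reverse $\bar r$ of $r$ has $s^-_{x\bar r}=s^+_{xr}$ and $s^+_{x\bar r}=s^-_{xr}$. A mixed RN has $\mathscr{R}=\mathscr{R}_{\mathrm{rev}}\sqcup\mathscr{R}_{\mathrm{irr}}$, where $r\in\mathscr{R}_{\mathrm{rev}}$ implies $\bar r\in\mathscr{R}_{\mathrm{rev}}$, and $r\in\mathscr{R}_{\mathrm{irr}}$ implies $\bar r\notin\mathscr{R}$. For $v\in\mathbb{R}^{\mathscr{R}}$, $v>0$ means $v$ is componentwise non-negative and nonzero. A futile cycle is a vector $v>0$ with $Sv=0$. For $g\in\mathbb{R}^{\mathscr{R}}$ (reaction energies), $(X,\mathscr{R},g)$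 is thermodynamic if $g\in(\ker S)^\perp$. The mixed RN is strictly thermodynamically sound if, for every $\gamma>1$, there is $g$ with all of the following: - $(X,\mathscr{R},g)$ is thermodynamic; - $|g_r|\le1$ for all $r\in\mathscr{R}_{\mathrm{rev}}$; - $g_r\le-\gamma$ for all $r\in\mathscr{R}_{\mathrm{irr}}$. *)

From HB Require Import structures.
From mathcomp Require Import all_boot all_order all_algebra.
From mathcomp Require Import reals.
Set Implicit Arguments. Unset Strict Implicit. Unset Printing Implicit Defensive.
Import Order.TTheory GRing.Theory Num.Theory.
Local Open Scope ring_scope.

(* A reaction network: species type X and reaction type Rc (finite types),
   with stoichiometric coefficients sm (reactant, s^-) and sp (product, s^+),
   indexed as sm r x = s^-_{xr}. *)
Section RN.
Variables (R : realType) (X Rc : finType) (sm sp : Rc -> X -> nat).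

Definition stoich (x : X) (r : Rc) : R := (sp r x)%:R - (sm r x)%:R.

Definition reactions_distinct : Prop :=
  forall r r' : Rc, (forall x, sm r x = sm r' x) -> (forall x, sp r x = sp r' x) -> r = r'.

Definition proper (r : Rc) : Prop :=
  exists x y, stoich x r < 0 /\ 0 < stoich y r.

Definition closed_RN : Prop := forall r, proper r.

Definition is_reverse (r' r : Rc) : Prop :=
  (forall x, sm r' x = sp r x) /\ (forall x, sp r' x = sm r x).

(* mixed RN: irr is the predicate of irreversible reactions, its complement R_rev *)
Definition mixed_RN (irr : pred Rc) : Prop :=
  (forall r, ~~ irr r -> exists r', ~~ irr r' /\ is_reverse r' r) /\
  (forall r, irr r -> forall r', ~ is_reverse r' r).

Definition S_mul (v : Rc -> R) (x : X) : R := \sum_(r : Rc) stoich x r * v r.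

Definition in_kerS (v : Rc -> R) : Prop := forall x, S_mul v x = 0.

(* v > 0 : componentwise nonnegative and nonzero *)
Definition vpos (v : Rc -> R) : Prop := (forall r, 0 <= v r) /\ exists r, v r != 0.

Definition futile_cycle (v : Rc -> R) : Prop := vpos v /\ in_kerS v.

Definition thermodynamic (g : Rc -> R) : Prop :=
  forall v, in_kerS v -> \sum_(r : Rc) g r * v r = 0.

Definition strictly_thermo_sound (irr : pred Rc) : Prop :=
  forall gamma : R, 1 < gamma ->
    exists g : Rc -> R, thermodynamic g /\
      (forall r, ~~ irr r -> `|g r| <= 1) /\
      (forall r, irr r -> g r <= - gamma).

End RN.

(* Soundness forces every futile cycle v through an irreversible reaction r to
   satisfy 0 = g.v <= g_r v_r + sum_(s <> r) v_s, which fails once gamma > 1 + sum v / v_r.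
   Conversely, if no such cycle exists then for each irreversible i the vector -S_i is not
   in the cone spanned by the columns of S (otherwise l + e_i would be one), so Farkas'
   lemma gives mu_i with mu_i.S <= 0 and mu_i.S_i < 0.  Summing, mu = sum_i mu_i yields
   energies d = mu.S that vanish on reversible pairs (d_r = -d_(rev r) <= 0) and are
   negative on irreversible reactions; a rescaling t d lies in the row space of S,
   hence in (ker S)^perp, and meets the bounds. *)

From HB Require Import structures.
From mathcomp Require Import all_boot all_order all_algebra.
From mathcomp Require Import reals.
From mathcomp Require Import ring lra.
Set Implicit Arguments. Unset Strict Implicit. Unset Printing Implicit Defensive.
Import Order.TTheory GRing.Theory Num.Theory.
Local Open Scope ring_scope.

Section Farkas.
Variables (R : realFieldType) (X I : finType).

Definition dot (u v : X -> R) : R := \sum_x u x * v x.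

Lemma dot_linearl (a a' : R) (u u' w : X -> R) :
  dot (fun x => a * u x + a' * u' x) w = a * dot u w + a' * dot u' w.
Proof. by rewrite /dot !mulr_sumr -big_split; apply: eq_bigr => x _ /=; ring. Qed.

Lemma dot_linearr (a a' : R) (u u' w : X -> R) :
  dot w (fun x => a * u x + a' * u' x) = a * dot w u + a' * dot w u'.
Proof. by rewrite /dot !mulr_sumr -big_split; apply: eq_bigr => x _ /=; ring. Qed.

Lemma dot0l (u : X -> R) : dot (fun=> 0) u = 0.
Proof. by rewrite /dot big1 // => x _; rewrite mul0r. Qed.

Lemma dot_self_gt0 (u : X -> R) : (exists x, u x != 0) -> 0 < dot u u.
Proof.
move=> [x0 ux0]; have sq_ge0 x : 0 <= u x * u x by rewrite -expr2 sqr_ge0.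
rewrite lt_def sumr_ge0 ?andbT // psumr_eq0 //.
by apply/allPn; exists x0; rewrite ?mem_index_enum //= mulf_eq0 orbb.
Qed.

Definition in_cone (P : {set I}) (c : I -> X -> R) (b : X -> R) : Prop :=
  exists l : I -> R, [/\ forall r, 0 <= l r, forall r, r \notin P -> l r = 0
                       & forall x, b x = \sum_r l r * c r x].

Definition separates (P : {set I}) (c : I -> X -> R) (b mu : X -> R) : Prop :=
  (forall r, r \in P -> dot mu (c r) <= 0) /\ 0 < dot mu b.

Lemma in_cone_subset (P Q : {set I}) c b :
  P \subset Q -> in_cone P c b -> in_cone Q c b.
Proof.
move=> /subsetP PQ [l [l_ge0 lP lb]]; exists l; split=> // r rQ.
by apply: lP; apply: contra rQ; apply: PQ.
Qed.

Lemma farkas_set0 c b : in_cone set0 c b \/ exists mu, separates set0 c b mu.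
Proof.
case: (boolP [forall x, b x == 0]) => [/forallP b0|].
  left; exists (fun=> 0); split=> // x.
  by rewrite big1 ?(eqP (b0 x)) // => r _; rewrite mul0r.
rewrite negb_forall => /existsP b_neq0.
by right; exists b; split=> [r|]; [rewrite inE | exact: dot_self_gt0].
Qed.

Section Projection.
Variables (c : I -> X -> R) (k : I) (mu : X -> R).
Hypothesis mu_ck_gt0 : 0 < dot mu (c k).
Let mu_ck_neq0 : dot mu (c k) != 0 := lt0r_neq0 mu_ck_gt0.

(* Fourier-Motzkin elimination of the generator c k: dot mu (proj u) = 0. *)
Definition proj (u : X -> R) : X -> R :=
  fun x => dot mu (c k) * u x + - dot mu u * c k x.

Lemma dot_proj nu u : dot nu (proj u) = dot mu (c k) * dot nu u - dot mu u * dot nu (c k).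
Proof. by rewrite /proj dot_linearr mulNr. Qed.

Lemma in_cone_proj (P : {set I}) b :
  k \notin P -> separates P c b mu ->
  in_cone P (fun r => proj (c r)) (proj b) -> in_cone (k |: P) c b.
Proof.
move=> kP [muP mub] [l [l_ge0 lP lb]].
set s := \sum_r l r * dot mu (c r).
have s_le0 : s <= 0.
  apply: sumr_le0 => r _; case: (boolP (r \in P)) => rP.
    by rewrite mulr_ge0_le0 ?muP.
  by rewrite lP // mul0r.
set tau := (dot mu b - s) / dot mu (c k).
exists (fun r => if r == k then tau else l r); split.
- move=> r; case: eqP => // _; rewrite divr_ge0 ?ltW //; lra.
- move=> r; rewrite !inE negb_or => /andP [/negbTE -> ?]; exact: lP.
move=> x; rewrite (bigD1 k) //= eqxx.
rewrite (eq_bigr (fun r => l r * c r x)); last by move=> r /negbTE ->.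
have -> : \sum_(r | r != k) l r * c r x = \sum_r l r * c r x.
  by rewrite [RHS](bigD1 k) //= lP // mul0r add0r.
have := lb x; rewrite /proj.
have -> : \sum_r l r * (dot mu (c k) * c r x + - dot mu (c r) * c k x)
          = dot mu (c k) * \sum_r l r * c r x - s * c k x.
  by rewrite /s mulr_sumr mulr_suml -sumrB; apply: eq_bigr => r _; ring.
move=> e.
rewrite -[b x](mulKf mu_ck_neq0).
have -> : dot mu (c k) * b x
          = dot mu (c k) * \sum_r l r * c r x - s * c k x + dot mu b * c k x by lra.
by rewrite /tau; field.
Qed.

Lemma separates_proj (P : {set I}) b nu :
  separates P (fun r => proj (c r)) (proj b) nu ->
  separates (k |: P) c b (fun x => 1 * nu x + - (dot nu (c k) / dot mu (c k)) * mu x).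
Proof.
have shift u : dot (fun x => 1 * nu x + - (dot nu (c k) / dot mu (c k)) * mu x) u
               = dot nu (proj u) / dot mu (c k).
  by rewrite dot_linearl dot_proj; field.
move=> [nuP nub]; split; last by rewrite shift divr_gt0.
move=> r; rewrite !inE => /orP [/eqP ->|rP].
  by rewrite shift dot_proj mulrC subrr mulr0.
by rewrite shift pmulr_lle0 ?invr_gt0 ?nuP.
Qed.

End Projection.

Theorem farkas (P : {set I}) c b : in_cone P c b \/ exists mu, separates P c b mu.
Proof.
have [n cardP] : exists n, #|P| = n by exists #|P|.
elim: n P c b cardP => [|n IH] P c b cardP.
  by rewrite (cards0_eq cardP); exact: farkas_set0.
have /card_gt0P [k kP] : (0 < #|P|)%N by rewrite cardP.
have cardPk : #|P :\ k| = n by move: cardP; rewrite (cardsD1 k) kP add1n => -[].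
have kPk : k \notin P :\ k by rewrite !inE eqxx.
rewrite -(setD1K kP).
have [cone|[mu sep]] := IH _ c b cardPk.
  by left; apply: in_cone_subset cone; apply: subsetUr.
have [mu_ck_le0|mu_ck_gt0] := lerP (dot mu (c k)) 0.
  right; exists mu; case: sep => muP mub; split=> // r.
  by rewrite in_setU1 => /orP [/eqP ->|]; [|exact: muP].
have [cone|[nu sep']] := IH _ (fun r => proj c k mu (c r)) (proj c k mu b) cardPk.
  by left; apply: (in_cone_proj mu_ck_gt0 kPk sep cone).
by right; eexists; apply: (separates_proj mu_ck_gt0 sep').
Qed.

End Farkas.

Lemma dot_suml (R : realFieldType) (X I : finType) (f : I -> X -> R) (u : X -> R) :
  dot (fun x => \sum_i f i x) u = \sum_i dot (f i) u.
Proof.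
by rewrite /dot; under eq_bigr do rewrite mulr_suml; exact: exchange_big.
Qed.

Lemma exists_scale_below (R : realFieldType) (I : finType) (P : pred I) (d : I -> R) gam :
  0 <= gam -> (forall i, P i -> d i < 0) -> exists t, forall i, P i -> t * d i <= - gam.
Proof.
move=> gam_ge0 d_lt0; set s := \sum_(j | P j) (- d j)^-1.
exists (gam * s) => i Pi.
have s_ge : (- d i)^-1 <= s.
  rewrite /s (bigD1 i) //= lerDl; apply: sumr_ge0 => j /andP [Pj _].
  by rewrite invr_ge0 oppr_ge0 ltW ?d_lt0.
have s_di : 1 <= s * - d i.
  rewrite -(mulVf (lt0r_neq0 _ : - d i != 0)) ?oppr_gt0 ?d_lt0 //.
  by rewrite ler_wpM2r // oppr_ge0 ltW ?d_lt0.
have -> : gam * s * d i = - (gam * (s * - d i)) by ring.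
by rewrite lerN2 ler_peMr.
Qed.

Section ReactionNetwork.
Variables (R : realType) (X Rc : finType) (sm sp : Rc -> X -> nat) (irr : pred Rc).

Definition stoich_col (r : Rc) : X -> R := fun x => stoich R sm sp x r.

Lemma dot_S_mul (mu : X -> R) (v : Rc -> R) :
  dot mu (S_mul sm sp v) = \sum_r dot mu (stoich_col r) * v r.
Proof.
rewrite /dot /S_mul; under [RHS]eq_bigr do rewrite mulr_suml.
rewrite exchange_big; apply: eq_bigr => x _ /=; rewrite mulr_sumr.
by apply: eq_bigr => r _; rewrite mulrA.
Qed.

Lemma thermodynamic_dot_stoich (mu : X -> R) :
  thermodynamic sm sp (fun r => dot mu (stoich_col r)).
Proof.
move=> v v_ker; rewrite -dot_S_mul /dot big1 // => x _.
by rewrite v_ker mulr0.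
Qed.

Lemma thermodynamic_scale (g : Rc -> R) (t : R) :
  thermodynamic sm sp g -> thermodynamic sm sp (fun r => t * g r).
Proof.
move=> g_thermo v v_ker.
rewrite (eq_bigr (fun r => t * (g r * v r))) => [|r _]; last by rewrite mulrA.
by rewrite -mulr_sumr g_thermo // mulr0.
Qed.

Lemma dot_stoich_reverse (mu : X -> R) (r r' : Rc) :
  is_reverse sm sp r' r -> dot mu (stoich_col r') = - dot mu (stoich_col r).
Proof.
move=> [sm_r' sp_r']; rewrite /dot -sumrN; apply: eq_bigr => x _.
by rewrite /stoich_col /stoich sm_r' sp_r' -mulrN opprB.
Qed.

Lemma futile_cycle_of_cone (i : Rc) :
  in_cone setT stoich_col (fun x => - stoich_col i x) ->
  exists v : Rc -> R, futile_cycle sm sp v /\ 0 < v i.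
Proof.
move=> [l [l_ge0 _ l_cone]].
set v := fun r => l r + (r == i)%:R.
have v_i : 0 < v i by rewrite /v eqxx ltr_wpDl.
exists v; split=> //; split.
  by split=> [r|]; [rewrite addr_ge0 | exists i; rewrite gt_eqF].
move=> x; rewrite /S_mul.
rewrite (eq_bigr (fun r => l r * stoich_col r x + stoich R sm sp x r * (r == i)%:R));
  last by move=> r _; rewrite /v /stoich_col mulrDr mulrC.
rewrite big_split /= -l_cone (bigD1 i) //= eqxx mulr1 big1 ?addr0 ?addNr //.
by move=> r /negbTE ->; rewrite mulr0.
Qed.

Definition irr_futile_cycle : Prop :=
  exists v : Rc -> R, futile_cycle sm sp v /\ exists r, irr r /\ 0 < v r.

Lemma sound_no_irr_futile_cycle :
  strictly_thermo_sound R sm sp irr -> ~ irr_futile_cycle.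
Proof.
move=> sound [v [[[v_ge0 _] v_ker] [i [irr_i v_i]]]].
set T := \sum_r v r.
have T_split : T = v i + \sum_(r | r != i) v r by rewrite /T (bigD1 i).
have rest_ge0 : 0 <= \sum_(r | r != i) v r by rewrite sumr_ge0.
have gam_gt1 : 1 < T / v i + 1 by rewrite ltrDr divr_gt0 //; lra.
have [g [g_thermo [g_rev g_irr]]] := sound _ gam_gt1.
have g_le1 r : g r <= 1.
  case: (boolP (irr r)) => [/g_irr|/g_rev]; last exact: le_trans (ler_norm _).
  by move/le_trans; apply; lra.
have g_i : g i * v i <= - T - v i.
  have := ler_wpM2r (ltW v_i) (g_irr i irr_i).
  by rewrite mulNr mulrDl mul1r divfK ?lt0r_neq0 // opprD.
have others : \sum_(r | r != i) g r * v r <= \sum_(r | r != i) v r.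
  by apply: ler_sum => r _; rewrite ler_piMl.
have := g_thermo v v_ker; rewrite (bigD1 i) //=.
lra.
Qed.

Lemma exists_irr_separator (i : Rc) : ~ irr_futile_cycle -> irr i ->
  exists mu : X -> R, (forall r, dot mu (stoich_col r) <= 0) /\ dot mu (stoich_col i) < 0.
Proof.
move=> no_futile irr_i.
have [cone|[mu [mu_le0 mu_gt0]]] := farkas setT stoich_col (fun x => - stoich_col i x).
  have [v [v_futile v_i]] := futile_cycle_of_cone cone.
  by case: no_futile; exists v; split=> //; exists i.
exists mu; split=> [r|]; first by apply: mu_le0; rewrite inE.
by move: mu_gt0; rewrite /dot; under eq_bigr do rewrite mulrN; rewrite sumrN oppr_gt0.
Qed.

Lemma exists_strict_potential : ~ irr_futile_cycle ->
  exists mu : X -> R, (forall r, dot mu (stoich_col r) <= 0) /\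
                      (forall r, irr r -> dot mu (stoich_col r) < 0).
Proof.
move=> no_futile.
have separator i : exists mu : X -> R,
    (forall r, dot mu (stoich_col r) <= 0) /\ (irr i -> dot mu (stoich_col i) < 0).
  case: (boolP (irr i)) => [irr_i|_].
    by have [mu [mu_le0 mu_lt0]] := exists_irr_separator no_futile irr_i; exists mu.
  by exists (fun=> 0); split=> // r; rewrite dot0l.
have [mus mus_sep] := fin_all_exists separator.
exists (fun x => \sum_i mus i x); split=> [r|r irr_r]; rewrite dot_suml.
  by apply: sumr_le0 => i _; apply: (mus_sep i).1.
rewrite (bigD1 r) //=.
have rest_le0 : \sum_(i | i != r) dot (mus i) (stoich_col r) <= 0.
  by apply: sumr_le0 => i _; apply: (mus_sep i).1.
have := (mus_sep r).2 irr_r; lra.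
Qed.

Lemma potential_reversible (mu : X -> R) (r : Rc) :
  mixed_RN sm sp irr -> (forall r, dot mu (stoich_col r) <= 0) ->
  ~~ irr r -> dot mu (stoich_col r) = 0.
Proof.
move=> [rev_closed _] mu_le0 /rev_closed [r' [_ rev_r']].
have := mu_le0 r'; rewrite (dot_stoich_reverse _ rev_r') oppr_le0 => ge0.
by apply/eqP; rewrite eq_le mu_le0.
Qed.

End ReactionNetwork.

Theorem theorem3 (R : realType) (X Rc : finType) (sm sp : Rc -> X -> nat)
  (irr : pred Rc)
  (hX : (0 < #|X|)%N) (hRc : (0 < #|Rc|)%N)
  (hdist : reactions_distinct sm sp)
  (hclosed : closed_RN R sm sp)
  (hmixed : mixed_RN sm sp irr) :
  strictly_thermo_sound R sm sp irr <->
  ~ (exists v : Rc -> R, futile_cycle sm sp v /\ exists r, irr r /\ 0 < v r).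
Proof.
split; first exact: sound_no_irr_futile_cycle.
move=> no_futile gam gam_gt1.
have [mu [mu_le0 mu_lt0]] := exists_strict_potential no_futile.
have [t t_irr] := exists_scale_below (ltW (lt_trans ltr01 gam_gt1)) mu_lt0.
exists (fun r => t * dot mu (stoich_col R sm sp r)); split; [|split].
- exact/thermodynamic_scale/thermodynamic_dot_stoich.
- move=> r /(potential_reversible hmixed mu_le0) ->.
  by rewrite mulr0 normr0 ler01.
- exact: t_irr.
Qed.
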